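(* Let $X$ be a separable $F$-space and let $A$ be a densely defined closed linear operator in $X$ such that $A^r$ is a closed operator for every positive integer $r$. Suppose there are a dense subset $X_0\subset D(A^\infty):=\bigcap_{n\ge 0}D(A^n)$ of $X$ and a mapping $B:X_0\to X_0$ such that: (1) $ABx=x$ for all $x\in X_0$; (2) $\sum_{n=1}^\infty A^n x$ converges unconditionally for all $x\in X_0$; (3) $\sum_{n=1}^\infty B^n x$ converges unconditionally for all $x\in X_0$. Then $A$ is frequently hypercyclic.
   Context: An $F$-space is a topological vector space over $\mathbb{K}\in\{\mathbb{R},\mathbb{C}\}$ whose topology is given by a complete translation-invariant metric, equivalently by an $F$-norm $\|\cdot\|$ (satisfying $\|x\|=0\iff x=0$; $\|\lambda x\|\le\|x\|$ for $|\lambda|\le1$; $\lim_{\lambda\to0}\|\lambda x\|=0$; $\|x+y\|\le\|x\|+\|y\|$). A series $\sum_k x_k$ in $X$ converges unconditionally if for every $\varepsilon>0$ there is $N\ge1$ such that $\|\sum_{k\in F}x_k\|<\varepsilon$ for every finite $F\subset\mathbb{N}$ with $F\cap\{1,\dots,N\}=\emptyset$. The domain of $A^n$ is $D(A^n)=\{x: x,Ax,\dots,A^{n-1}x\in D(A)\}$. The lower density of $E\subset\mathbb{N}$ is $\underline{\mathrm{dens}}(E)=\liminf_{N\to\infty}\#(E\cap\{1,\dots,N\})/N$. A (possibly unbounded) densely defined operator $T$ in $X$ is frequently hypercyclic if there is a vector $f\in D(T)$ such that $T^nf\in D(T)$ for every $n\ge1$ and, for every non-empty open $U\subset X$, the set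 $\{n\in\mathbb{N}: T^nf\in U\}$ has positive lower density. *)

From mathcomp Require Import all_boot all_order all_algebra.
From mathcomp Require Import all_classical all_reals.
From mathcomp Require Import sequences.
From mathcomp.real_closed Require Import complex.

Set Implicit Arguments.
Unset Strict Implicit.
Unset Printing Implicit Defensive.

Import Order.TTheory GRing.Theory Num.Theory.
Local Open Scope classical_set_scope.
Local Open Scope ring_scope.

Section FSpaces.
Variables (R : realType) (K : numFieldType) (X : lmodType K).
Variable nrm : X -> R.

Definition is_Fnorm : Prop :=
  [/\ (forall x : X, nrm x = 0 <-> x = 0),
      (forall (l : K) (x : X), `|l| <= 1 -> nrm (l *: x) <= nrm x),
      (forall (x : X) (e : R), 0 < e ->
         exists d : K, 0 < d /\ forall l : K, `|l| < d -> nrm (l *: x) < e) &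
      (forall x y : X, nrm (x + y) <= nrm x + nrm y)].

Definition Fcomplete : Prop :=
  forall u : nat -> X,
    (forall e : R, 0 < e -> exists N : nat, forall m n : nat,
        (N <= m)%N -> (N <= n)%N -> nrm (u m - u n) < e) ->
    exists x : X, forall e : R, 0 < e -> exists N : nat, forall n : nat,
        (N <= n)%N -> nrm (u n - x) < e.

Definition Fdense (S : set X) : Prop :=
  forall (x : X) (e : R), 0 < e -> exists s : X, S s /\ nrm (s - x) < e.

Definition Fopen (U : set X) : Prop :=
  forall u : X, U u -> exists e : R, 0 < e /\ forall y : X, nrm (y - u) < e -> U y.

Definition Fseparable : Prop := exists S : set X, countable S /\ Fdense S.

Definition Fspace : Prop := is_Fnorm /\ Fcomplete.

(* Unbounded operators: a domain D and a map A (only meaningful on D). *)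
Definition linear_op (D : set X) (A : X -> X) : Prop :=
  [/\ D 0,
      (forall x y, D x -> D y -> D (x + y)),
      (forall (l : K) x, D x -> D (l *: x)),
      (forall x y, D x -> D y -> A (x + y) = A x + A y) &
      (forall (l : K) x, D x -> A (l *: x) = l *: A x)].

(* Closed operator: the graph {(x, A x) : x in D} is closed in X x X. *)
Definition closed_op (D : set X) (A : X -> X) : Prop :=
  forall x y : X,
    (forall e : R, 0 < e -> exists z : X, [/\ D z, nrm (z - x) < e & nrm (A z - y) < e]) ->
    D x /\ A x = y.

(* D(A^n) = {x : x, Ax, ..., A^(n-1) x in D(A)}; A^n acts as iter n A. *)
Definition dom_pow (D : set X) (A : X -> X) (n : nat) : set X :=
  fun x => forall k : nat, (k < n)%N -> D (iter k A x).

Definition dom_inf (D : set X) (A : X -> X) : set X :=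
  fun x => forall n : nat, dom_pow D A n x.

Definition uncond_conv (u : nat -> X) : Prop :=
  forall e : R, 0 < e -> exists N : nat, (1 <= N)%N /\
    forall s : seq nat, uniq s -> all (fun k => (N < k)%N) s ->
      nrm (\sum_(k <- s) u k) < e.

End FSpaces.

Definition lower_density (R : realType) (E : set nat) : \bar R :=
  limn_einf (fun N : nat =>
    ((\sum_(1 <= n < N.+1) (if `[< E n >] then 1 else 0 : R)) / N%:R)%:E).

Definition freq_hypercyclic (R : realType) (K : numFieldType) (X : lmodType K)
  (nrm : X -> R) (D : set X) (T : X -> X) : Prop :=
  exists f : X, D f /\ (forall n : nat, (1 <= n)%N -> D (iter n T f)) /\
    forall U : set X, Fopen nrm U -> U !=set0 ->
      (0 < lower_density R [set n | U (iter n T f)])%E.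

Definition theorem2p1_for (R : realType) (K : numFieldType) : Prop :=
  forall (X : lmodType K) (nrm : X -> R) (D : set X) (A : X -> X),
    Fspace nrm -> Fseparable nrm ->
    linear_op D A -> Fdense nrm D -> closed_op nrm D A ->
    (forall r : nat, (0 < r)%N -> closed_op nrm (dom_pow D A r) (iter r A)) ->
    forall (X0 : set X) (B : X -> X),
      X0 `<=` dom_inf D A -> Fdense nrm X0 ->
      (forall x, X0 x -> X0 (B x)) ->
      (forall x, X0 x -> A (B x) = x) ->
      (forall x, X0 x -> uncond_conv nrm (fun n => iter n A x)) ->
      (forall x, X0 x -> uncond_conv nrm (fun n => iter n B x)) ->
      freq_hypercyclic nrm D A.

From mathcomp Require Import all_boot all_order all_algebra.
From mathcomp Require Import all_classical all_reals.
From mathcomp Require Import ereal topology normedtype sequences.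
From mathcomp.real_closed Require Import complex.
From mathcomp Require Import zify lra.
Set Implicit Arguments.
Unset Strict Implicit.
Unset Printing Implicit Defensive.
Import Order.TTheory GRing.Theory Num.Theory.

(* Choose a sequence (y_l) in X0 that returns arbitrarily close to every point
   of X at arbitrarily late indices, and thresholds N_j ([gap j]) beyond which
   all tails of the unconditionally convergent series sum_n A^n y_k and
   sum_n B^n y_k, k <= j, are smaller than a weight w_j of order 2^-j.  Next
   build sets E_k ([sep_set k]) of positive lower density whose elements are
   far apart: |n - m| > N_(max k j) for distinct n in E_k, m in E_j (E_k is a
   residue class modulo a rapidly growing period, thinned by a few residues
   modulo the later periods).  Put f = sum_k sum_(n in E_k) B^n y_k.  As
   AB = id on X0, for m in E_l the vector A^m f is y_l plus, for each other
   pair (k, n), a term A^(m-n) y_k or B^(n-m) y_k; grouped by k these are tails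
   of the two series, so A^m f lies within 4 2^-l of y_l.  Closedness of A^m
   makes f an element of D(A^m), with A^m f the limit of A^m applied to the
   partial sums of f.  Thus every nonempty open set contains A^m f for all m
   in some E_l. *)

Lemma count_iota_leq (p : pred nat) N M :
  N <= M -> count p (iota 0 N) <= count p (iota 0 M).
Proof. by move=> /subnK <-; rewrite addnC iotaD count_cat leq_addr. Qed.

Lemma count_iota_modn (p : pred nat) q a : 0 < q ->
  count (fun n => p (n %% q)) (iota 0 (a * q)) = a * count p (iota 0 q).
Proof.
move=> q0; elim: a => [|a IH]; first by rewrite mul0n.
rewrite mulSn addnC iotaD count_cat IH add0n mulSn addnC; congr (_ + _).
rewrite -[a * q]addn0 iotaDl count_map; apply: eq_in_count => x.
by rewrite mem_iota /= => hx; rewrite modnMDl modn_small.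
Qed.

Lemma count_iota_between lo hi q :
  count (fun x => lo <= x <= hi) (iota 0 q) <= hi.+1 - lo.
Proof.
rewrite -size_filter -(size_iota lo (hi.+1 - lo)).
apply: uniq_leq_size; first by rewrite filter_uniq // iota_uniq.
move=> x; rewrite mem_filter mem_iota => /andP[/andP[h1 h2] _].
rewrite mem_iota; lia.
Qed.

Lemma count_has_le_sum (T : eqType) (c : nat -> pred T) (J : seq nat) (s : seq T) :
  count (fun x => has (c^~ x) J) s <= \sum_(j <- J) count (c j) s.
Proof.
elim: J => [|j J IH]; first by rewrite big_nil count_pred0.
rewrite big_cons.
apply: (@leq_trans (count (predU (c j) (fun x => has (c^~ x) J)) s)).
  exact: sub_count.
rewrite -(leq_add2r (count (predI (c j) (fun x => has (c^~ x) J)) s)).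
by rewrite count_predUI -addnA leq_add2l (leq_trans IH) ?leq_addr.
Qed.

Lemma count_le_cover (T : eqType) (a b : pred T) (c : nat -> pred T)
    (J : seq nat) (s : seq T) :
  (forall x, x \in s -> a x -> b x || has (c^~ x) J) ->
  count a s <= count b s + \sum_(j <- J) count (c j) s.
Proof.
move=> cover.
have -> : count a s = count (fun x => a x && (b x || has (c^~ x) J)) s.
  by apply: eq_in_count => x xs /=; case ax: (a x) => //=; rewrite cover.
apply: (@leq_trans (count (predU b (fun x => has (c^~ x) J)) s)).
  by apply: sub_count => x /andP[].
rewrite -(leq_add2r (count (predI b (fun x => has (c^~ x) J)) s)).
rewrite count_predUI -addnA leq_add2l.
exact: leq_trans (count_has_le_sum _ _ _) (leq_addr _ _).
Qed.

Lemma divn_lt_gap n m q : n %/ q < m %/ q -> n %/ q * q + q <= m %/ q * q.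
Proof. by move=> lt_nm; rewrite addnC -mulSn leq_mul2r lt_nm orbT. Qed.

Lemma eq_modn_gap n m q : n %% q = m %% q -> n != m -> (n + q <= m) || (m + q <= n).
Proof.
move=> nm_q nm; have n_eq := divn_eq n q; have m_eq := divn_eq m q.
rewrite nm_q in n_eq; have [ab|ba|ab] := ltngtP (n %/ q) (m %/ q).
- by have := divn_lt_gap ab; lia.
- by have := divn_lt_gap ba; lia.
- by rewrite ab in n_eq; move/eqP: nm; lia.
Qed.

Lemma modn_off_centre_gap n m p N : N < p -> m %% (2 * p) = p ->
  (n %% (2 * p) + N < p) || (p + N < n %% (2 * p)) -> (n + N < m) || (m + N < n).
Proof.
move=> Np m_q off; have n_eq := divn_eq n (2 * p); have m_eq := divn_eq m (2 * p).
have n_lt : n %% (2 * p) < 2 * p by rewrite ltn_mod; lia.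
rewrite m_q in m_eq; have [ab|ba|ab] := ltngtP (n %/ (2 * p)) (m %/ (2 * p)).
- by have := divn_lt_gap ab; lia.
- by have := divn_lt_gap ba; lia.
- rewrite ab in n_eq; lia.
Qed.

Section SeparatedSets.
Variable gap : nat -> nat.

(* The factor [40 (2 gap j + 1) 2^j] yields [period_growth]: the residues
   excluded by [off_centre j] then take at most a [2^-(j+1)] share of each
   residue class modulo [period k], k < j. *)
Fixpoint centre (j : nat) : nat :=
  if j is j'.+1 then 40 * (2 * gap j + 1) * 2 ^ j * centre j'
  else 2 * gap 0 + 2.

Definition period j := 2 * centre j.

Definition off_centre j n :=
  (n %% period j + gap j < centre j) || (centre j + gap j < n %% period j).

(* Elements of different [sep_set]s are far apart: for [k < j <= n] the
   residue of [n] in [sep_set k] modulo [period j] avoids the neighbourhood of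
   [centre j], where the residue of every [m] in [sep_set j] sits, and for
   [j > n] every such [m] is at least [centre j > n + gap j]. *)
Definition sep_set k n :=
  (n %% period k == centre k) && all (off_centre^~ n) (iota k.+1 (n - k)).

Lemma centre_gt0 j : 0 < centre j.
Proof. by elim: j => [|j IH] /=; rewrite ?muln_gt0 ?expn_gt0 ?IH; lia. Qed.

Lemma centre_large j : 2 * gap j + j < centre j.
Proof.
case: j => [/=|j]; first lia.
rewrite /=; have c_gt0 := centre_gt0 j.
have j_lt : j.+2 <= 2 ^ j.+1 by rewrite ltn_expl.
set a := 2 * gap j.+1 + 1; set b := 2 ^ j.+1 in j_lt *.
have h1 : a * b <= a * b * centre j by rewrite leq_pmulr.
have h2 : a * j.+2 <= a * b by rewrite leq_mul2l j_lt orbT.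
rewrite -mulnA -mulnA mulnA; nia.
Qed.

Lemma period_gt0 j : 0 < period j.
Proof. by rewrite /period muln_gt0 centre_gt0. Qed.

Lemma period_mono k j : k <= j -> period k <= period j.
Proof.
move=> /subnK <-; elim: (j - k) => [//|d IH]; rewrite addSn.
apply: leq_trans IH _; rewrite leq_mul2l /= leq_pmull //.
by rewrite !muln_gt0 expn_gt0; lia.
Qed.

Lemma period_growth k j : k < j ->
  5 * (2 * gap j + 1) * 2 ^ j.+1 * period k <= period j.
Proof.
case: j => [//|j] kj; have := period_mono (ltnSE kj); rewrite /period /= => le_kj.
rewrite expnS; set a := 2 * gap j.+1 + 1; set b := 2 ^ j.+1.
have : a * b * (2 * centre k) <= a * b * (2 * centre j) by rewrite leq_mul2l le_kj orbT.
lia.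
Qed.

Lemma sep_set_large k n : sep_set k n -> 2 * gap k + k < n.
Proof.
by case/andP=> /eqP n_k _; have := leq_mod n (period k); have := centre_large k; lia.
Qed.

Lemma sep_set_far_lt k j n m : k < j -> sep_set k n -> sep_set j m ->
  (n + gap j < m) || (m + gap j < n).
Proof.
move=> kj /andP[_ /allP off_n] /andP[/eqP m_j _]; have := centre_large j.
have [jn|nj] := leqP j n => [cj|].
- apply: (@modn_off_centre_gap n m (centre j)) => //; first lia.
  by apply: off_n; rewrite mem_iota; lia.
- by have := leq_mod m (period j); rewrite m_j; lia.
Qed.

Lemma sep_set_far k j n m : sep_set k n -> sep_set j m -> (k != j) || (n != m) ->
  (n + gap (maxn k j) < m) || (m + gap (maxn k j) < n).
Proof.
move=> Ekn Ejm kn_jm; have [kj|jk|kj] := ltngtP k j; last subst j.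
- exact: sep_set_far_lt Ekn Ejm.
- by rewrite orbC; apply: sep_set_far_lt Ejm Ekn.
- move: kn_jm; rewrite eqxx /= => nm.
  have nm_k : n %% period k = m %% period k.
    by move: Ekn Ejm => /andP[/eqP -> _] /andP[/eqP -> _].
  by have := eq_modn_gap nm_k nm; have := centre_large k; rewrite /period; lia.
Qed.

Lemma count_near_centre j N :
  count (predC (off_centre j)) (iota 0 N) * period j <= 5 * (2 * gap j + 1) * N.
Proof.
have cj := centre_large j; have pj := period_gt0 j.
have [small_N|large_N] := ltnP (2 * N) (centre j).
  have -> : count (predC (off_centre j)) (iota 0 N) = 0; last by rewrite mul0n.
  apply/eqP; rewrite -leqn0 leqNgt -has_count; apply/hasPn => n.
  rewrite mem_iota add0n => /andP[_ nN]; rewrite negbK /off_centre.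
  by have := leq_mod n (period j); rewrite /period; lia.
set near := fun x => centre j - gap j <= x <= centre j + gap j.
have -> : count (predC (off_centre j)) (iota 0 N) =
          count (fun n => near (n %% period j)) (iota 0 N).
  by apply: eq_count => n; rewrite /= /off_centre negb_or -!leqNgt /near; lia.
have near_N : count (fun n => near (n %% period j)) (iota 0 N)
              <= (N %/ period j).+1 * (2 * gap j + 1).
  apply: (@leq_trans (count (fun n => near (n %% period j))
                          (iota 0 ((N %/ period j).+1 * period j)))).
    by apply/count_iota_leq/ltnW; rewrite ltn_ceil.
  rewrite count_iota_modn // leq_mul2l (leq_trans (count_iota_between _ _ _)) ?orbT //.
  lia.
have div_N : N %/ period j * period j <= N by rewrite leq_divM.
apply: (leq_trans (leq_mul (near_N) (leqnn (period j)))).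
rewrite mulnAC [X in _ <= X]mulnAC leq_mul2r; apply/orP; right.
by rewrite mulSn; rewrite /period in div_N *; lia.
Qed.

Lemma count_near_centre_lt k j N : k < j ->
  count (predC (off_centre j)) (iota 0 N) * (2 ^ j.+1 * period k) <= N.
Proof.
move=> kj; have := count_near_centre j N; have := period_growth kj.
set b := count _ _; set a := 5 * (2 * gap j + 1) => grow near.
have a_gt0 : 0 < a by rewrite /a; lia.
rewrite -(leq_pmul2l a_gt0); apply: leq_trans near.
have : b * (a * 2 ^ j.+1 * period k) <= b * period j by rewrite leq_mul2l grow orbT.
lia.
Qed.

Lemma count_residue_centre k N :
  N %/ period k <= count (fun n => n %% period k == centre k) (iota 0 N).
Proof.
have ck := centre_large k; have pk := period_gt0 k.
apply: leq_trans (count_iota_leq _ (leq_divM N (period k))).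
rewrite (count_iota_modn (pred1 (centre k))) //.
have -> : count (pred1 (centre k)) (iota 0 (period k)) = 1.
  rewrite (count_uniq_mem _ (iota_uniq _ _)) mem_iota /period.
  by apply/eqP; rewrite eqb1; lia.
by rewrite muln1.
Qed.

Lemma count_sep_set_cover k N :
  count (fun n => n %% period k == centre k) (iota 0 N) <=
  count (sep_set k) (iota 0 N) +
  \sum_(j <- iota k.+1 N) count (predC (off_centre j)) (iota 0 N).
Proof.
apply: count_le_cover => n; rewrite mem_iota add0n => /andP[_ nN] n_k.
rewrite /sep_set n_k /=; case: (boolP (all _ _)) => //=.
rewrite -has_predC => /hasP[j jn offj]; apply/hasP; exists j => //.
by move: jn; rewrite !mem_iota; lia.
Qed.

End SeparatedSets.

Local Open Scope ring_scope.

Lemma sum_inv_pow2_iota (R : realType) a c :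
  \sum_(j <- iota a c) ((2 : R) ^+ j.+1)^-1 = (2 ^+ a)^-1 - (2 ^+ (a + c))^-1.
Proof.
elim: c a => [|c IH] a; first by rewrite big_nil addn0 subrr.
rewrite /= big_cons IH addSnnS exprS invfM.
set x := ((2 : R) ^+ a)^-1; set y := (2 ^+ (a + c.+1))^-1; lra.
Qed.

Lemma sum_inv_pow2_iota_le (R : realType) a c :
  \sum_(j <- iota a c) ((2 : R) ^+ j.+1)^-1 <= (2 ^+ a)^-1.
Proof. by rewrite sum_inv_pow2_iota lerBlDr lerDl invr_ge0 exprn_ge0. Qed.

Lemma inv_pow2_lt (R : realType) (e : R) : 0 < e ->
  exists K, forall k, (K <= k)%N -> ((2 : R) ^+ k)^-1 < e.
Proof.
move=> e_gt0; have e_bound : e^-1 < (Num.bound e^-1)%:R.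
  by apply/archi_boundP; rewrite invr_ge0 ltW.
exists (Num.bound e^-1) => k Kk.
rewrite -(invrK e) ltf_pV2 ?posrE ?exprn_gt0 ?invr_gt0 //.
apply: (lt_le_trans e_bound); apply: (@le_trans _ _ k%:R); first by rewrite ler_nat.
by rewrite -natrX ler_nat ltnW // ltn_expl.
Qed.

Lemma sum_count_near_centre_le (R : realType) gap k N :
  (\sum_(j <- iota k.+1 N) count (predC (off_centre gap j)) (iota 0 N))%:R
    * (2 * (period gap k)%:R) <= N%:R :> R.
Proof.
set q : R := (period gap k)%:R; set n : R := N%:R.
have q_gt0 : 0 < q by rewrite ltr0n period_gt0.
rewrite natr_sum -ler_pdivlMr ?mulr_gt0 //.
apply: (@le_trans _ _ (\sum_(j <- iota k.+1 N) n / q * ((2 : R) ^+ j.+1)^-1)).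
  rewrite big_seq_cond [X in _ <= X]big_seq_cond; apply: ler_sum => j.
  rewrite andbT mem_iota => /andP[kj _].
  have := @count_near_centre_lt gap k j N kj.
  rewrite -(ler_nat R) natrM [X in _ * X]natrM natrX => near.
  by rewrite ler_pdivlMr ?exprn_gt0 // ler_pdivlMr // -mulrA.
rewrite -mulr_sumr (le_trans (ler_wpM2l _ (sum_inv_pow2_iota_le _ _ _))) //.
  by rewrite divr_ge0 ?ler0n ?ltW.
have half : ((2 : R) ^+ k.+1)^-1 <= 2^-1.
  by rewrite lef_pV2 ?posrE ?exprn_gt0 // -[X in X <= _]expr1 ler_eXn2l ?ltr1n.
apply: le_trans (ler_wpM2l _ half) _; first by rewrite divr_ge0 ?ler0n ?ltW.
by rewrite -mulrA [q^-1 * _]mulrC -invfM.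
Qed.

Lemma sep_set_density (R : realType) gap k N : (4 * period gap k <= N)%N ->
  ((4 * period gap k)%:R)^-1 <= (count (sep_set gap k) (iota 0 N))%:R / N%:R :> R.
Proof.
move=> large_N; have pk := period_gt0 gap k.
have residue := count_residue_centre gap k N.
have cover := count_sep_set_cover gap k N.
have near := sum_count_near_centre_le R gap k N.
have ceil_N : (N < (N %/ period gap k).+1 * period gap k)%N by rewrite ltn_ceil.
move: near; set S := \sum_(j <- _) _; set C := count (sep_set gap k) _ => near.
set q : R := (period gap k)%:R; set n : R := N%:R; set d := (N %/ period gap k)%N.
have q_gt0 : 0 < q by rewrite ltr0n.
have ceil_N' : n < (d%:R + 1) * q by rewrite /n /q natr1 -natrM ltr_nat.
have cover' : d%:R <= C%:R + S%:R :> R by rewrite -natrD ler_nat (leq_trans residue).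
have large_N' : 4 * q <= n by rewrite /q /n -natrM ler_nat.
have n_le : n <= C%:R * (4 * q) by nra.
have n_gt0 : 0 < n by lra.
by rewrite natrM -/q ler_pdivlMr // mulrC ler_pdivrMr // mulr_gt0.
Qed.

Lemma limn_einf_ge (R : realType) (u : (\bar R)^nat) (c : R) N0 :
  (forall N, (N0 <= N)%N -> (c%:E <= u N)%E) -> (c%:E <= limn_einf u)%E.
Proof.
move=> ge_c; rewrite limn_einf_lim; apply: (@le_trans _ _ (einfs u N0)).
  by apply: le_ereal_inf_tmp => _ [n /= N0n <-]; exact: ge_c.
by rewrite (cvg_lim _ (@cvg_einfs_sup _ u)) //; apply: ereal_sup_ubound; exists N0.
Qed.

Lemma lower_density_gt0 (R : realType) gap k (E : set nat) :
  (forall n, sep_set gap k n -> E n) -> (0 < lower_density R E)%E.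
Proof.
move=> sepE; have pk := period_gt0 gap k.
set c : R := ((4 * period gap k)%:R)^-1.
have c_gt0 : 0 < c by rewrite invr_gt0 ltr0n; lia.
apply: (@lt_le_trans _ _ c%:E); first by rewrite lte_fin.
apply: (limn_einf_ge (N0 := 4 * period gap k)) => N large_N; rewrite lee_fin.
apply: le_trans (sep_set_density R large_N) _.
apply: ler_wpM2r; first by rewrite invr_ge0 ler0n.
apply: (@le_trans _ _ (count (sep_set gap k) (iota 1 N))%:R).
  rewrite ler_nat (leq_trans (count_iota_leq _ (leqnSn N))) //.
  rewrite -[N.+1]add1n iotaD count_cat /= add0n.
  by case: (boolP (sep_set gap k 0)) => // /sep_set_large.
rewrite -sum1_count natr_sum big_mkcond /index_iota subn1 /=.
by apply: ler_sum => n _; case: ifP => [/sepE En|_]; case: asboolP.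
Qed.

Local Open Scope classical_set_scope.

Lemma countable_sub_range (T : Type) (t0 : T) (S : set T) :
  countable S -> exists g : nat -> T, S `<=` range g.
Proof.
move=> /countable_injP [h h_inj].
pose g n := if pselect (exists s, S s /\ h s = n) is left e then projT1 (cid e) else t0.
exists g => s Ss; exists (h s) => //; rewrite /g.
case: pselect => [e|]; last by case; exists s.
by case: cid => s' [Ss' hs'] /=; apply: h_inj; rewrite ?inE.
Qed.

Lemma logn2_eq_late n L : exists l, (L <= l)%N /\ logn 2 l.+1 = n.
Proof.
have t_gt0 : (0 < 2 ^ n * (2 * L + 1))%N by rewrite muln_gt0 expn_gt0; lia.
exists (2 ^ n * (2 * L + 1)).-1; rewrite prednK //; split.
  by have := leq_pmull (2 * L + 1) (expn_gt0 2 n); lia.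
rewrite lognM ?expn_gt0 //; last by lia.
by rewrite pfactorK // logn_coprime ?addn0 // coprime2n oddD oddM.
Qed.

Section FNorm.
Variables (R : realType) (K : numFieldType) (X : lmodType K) (nrm : X -> R).
Hypothesis Fnorm : is_Fnorm nrm.

Definition Fcvg (u : nat -> X) (a : X) :=
  forall e, 0 < e -> exists N, forall n, (N <= n)%N -> nrm (u n - a) < e.

Lemma Fnorm0 : nrm 0 = 0.
Proof. by case: Fnorm => norm_eq0 _ _ _; apply/norm_eq0. Qed.

Lemma FnormN x : nrm (- x) = nrm x.
Proof.
case: Fnorm => _ normZ _ _.
have le_N y : nrm (- y) <= nrm y by rewrite -scaleN1r normZ ?normrN ?normr1.
by apply/eqP; rewrite eq_le le_N /= -{1}(opprK x) le_N.
Qed.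

Lemma Fnorm_triangle x y : nrm (x + y) <= nrm x + nrm y.
Proof. by case: Fnorm. Qed.

Lemma FnormB x y : nrm (x - y) = nrm (y - x).
Proof. by rewrite -FnormN opprB. Qed.

Lemma Fnorm_sub_triangle x y z : nrm (x - z) <= nrm (x - y) + nrm (y - z).
Proof.
have -> : x - z = (x - y) + (y - z) by rewrite addrA subrK.
exact: Fnorm_triangle.
Qed.

Lemma Fnorm_sum (I : Type) (s : seq I) (F : I -> X) :
  nrm (\sum_(i <- s) F i) <= \sum_(i <- s) nrm (F i).
Proof.
elim: s => [|i s IH]; first by rewrite !big_nil Fnorm0.
by rewrite !big_cons (le_trans (Fnorm_triangle _ _)) ?lerD.
Qed.

Lemma Fcauchy_cvg (u : nat -> X) : Fcomplete nrm ->
  (forall e, 0 < e -> exists N, forall n m, (N <= n <= m)%N -> nrm (u m - u n) < e) ->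
  exists a, Fcvg u a.
Proof.
move=> complete cauchy; apply: complete => e /cauchy [N u_N]; exists N => n m Nn Nm.
have [nm|mn] := leqP n m; first by rewrite FnormB u_N ?Nn.
by rewrite u_N // Nm ltnW.
Qed.

Lemma Fcvg_le (u : nat -> X) a c r N0 : Fcvg u a ->
  (forall n, (N0 <= n)%N -> nrm (u n - c) <= r) -> nrm (a - c) <= r.
Proof.
move=> u_a u_c; apply/ler_addgt0Pr => d /u_a [N u_N].
apply: le_trans (Fnorm_sub_triangle _ (u (maxn N N0)) _) _.
rewrite addrC; apply: lerD; first exact/u_c/leq_maxr.
by rewrite FnormB ltW // u_N // leq_maxl.
Qed.

Lemma Fcvg_closed_op (D : set X) (T : X -> X) (u : nat -> X) a b :
  closed_op nrm D T -> (forall n, D (u n)) -> Fcvg u a -> Fcvg (T \o u) b ->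
  D a /\ T a = b.
Proof.
move=> closedT Du u_a Tu_b; apply: closedT => e e_gt0.
have [N1 u_N1] := u_a e e_gt0; have [N2 Tu_N2] := Tu_b e e_gt0.
exists (u (maxn N1 N2)); split; first exact: Du.
  by rewrite u_N1 // leq_maxl.
by rewrite (Tu_N2 (maxn N1 N2)) // leq_maxr.
Qed.

(* Each point of [S] is [logn 2 l.+1] for infinitely many [l]; at index [l]
   it is approximated from [X0] to within [2^-l]. *)
Lemma recurrent_dense_seq (X0 : set X) : Fseparable nrm -> Fdense nrm X0 ->
  exists y : nat -> X, (forall l, X0 (y l)) /\
    forall x e L, 0 < e -> exists l, (L <= l)%N /\ nrm (y l - x) < e.
Proof.
case=> S [/(countable_sub_range 0) [g Sg] S_dense] X0_dense.
have approx l : exists z, X0 z /\ nrm (z - g (logn 2 l.+1)) < ((2 : R) ^+ l)^-1.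
  by apply: X0_dense; rewrite invr_gt0 exprn_gt0.
pose y l := projT1 (cid (approx l)).
exists y; split => [l|x e L e_gt0]; first by rewrite /y; case: cid => z [].
have e2 : 0 < e / 2 by lra.
have [s [Ss s_x]] := S_dense x _ e2; have [n _ gn] := Sg s Ss.
have [K0 K0_small] := inv_pow2_lt e2.
have [l [Ll ln]] := logn2_eq_late n (maxn L K0).
exists l; split; first exact: leq_trans (leq_maxl L K0) Ll.
have y_s : nrm (y l - s) < ((2 : R) ^+ l)^-1.
  by rewrite /y -gn -ln; case: cid => z [].
apply: le_lt_trans (Fnorm_sub_triangle _ s _) _.
have := K0_small l (leq_trans (leq_maxr L K0) Ll); lra.
Qed.

End FNorm.

Section DomainPowers.
Variables (K : numFieldType) (X : lmodType K) (D : set X) (A : X -> X).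
Hypothesis A_lin : linear_op D A.

Lemma dom_infP x : dom_inf D A x <-> forall k, D (iter k A x).
Proof. by split => [dom k|dom n k _]; [exact: (dom k.+1 k) | exact: dom]. Qed.

Lemma linear_op0 : A 0 = 0.
Proof.
case: A_lin => D0 _ _ AD _.
by apply: (addrI (A 0)); rewrite -AD // !addr0.
Qed.

Lemma iter_linear0 k : iter k A 0 = 0.
Proof. by elim: k => [//|k IH]; rewrite iterS IH linear_op0. Qed.

Lemma dom_inf_iterD x y : dom_inf D A x -> dom_inf D A y ->
  forall k, iter k A (x + y) = iter k A x + iter k A y.
Proof.
move=> /dom_infP Dx /dom_infP Dy; elim => [//|k IH].
by rewrite !iterS IH; case: A_lin => _ _ _ AD _; apply: AD.
Qed.

Lemma dom_infD x y : dom_inf D A x -> dom_inf D A y -> dom_inf D A (x + y).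
Proof.
move=> Dx Dy; apply/dom_infP => k; rewrite dom_inf_iterD //.
by case: A_lin => _ DD _ _ _; apply: DD; [move/dom_infP: Dx | move/dom_infP: Dy].
Qed.

Lemma dom_inf0 : dom_inf D A 0.
Proof. by apply/dom_infP => k; rewrite iter_linear0; case: A_lin. Qed.

Lemma dom_inf_sum (I : Type) (s : seq I) (P : pred I) (F : I -> X) :
  (forall i, dom_inf D A (F i)) -> dom_inf D A (\sum_(i <- s | P i) F i).
Proof. by move=> DF; apply: big_ind => //; [exact: dom_inf0 | exact: dom_infD]. Qed.

Lemma iter_sum (I : Type) (s : seq I) (F : I -> X) k :
  (forall i, dom_inf D A (F i)) ->
  iter k A (\sum_(i <- s) F i) = \sum_(i <- s) iter k A (F i).
Proof.
move=> DF; elim: s => [|i s IH]; first by rewrite !big_nil iter_linear0.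
by rewrite !big_cons dom_inf_iterD ?IH //; apply: dom_inf_sum.
Qed.

End DomainPowers.

Section RightInverse.
Variables (T : Type) (A B : T -> T) (X0 : set T).
Hypotheses (X0_B : forall x, X0 x -> X0 (B x)) (AB : forall x, X0 x -> A (B x) = x).

Lemma X0_iter_B n x : X0 x -> X0 (iter n B x).
Proof. by move=> X0x; elim: n => [//|n IH]; rewrite iterS; apply: X0_B. Qed.

Lemma iter_AB m n x : X0 x ->
  iter m A (iter n B x) = if (m <= n)%N then iter (n - m) B x else iter (m - n) A x.
Proof.
move=> X0x; elim: m n => [|m IH] [|n] //.
by rewrite iterSr [iter n.+1 B x]iterS AB ?IH ?subSS //; apply: X0_iter_B.
Qed.

End RightInverse.

Section Construction.
Variables (R : realType) (K : numFieldType) (X : lmodType K) (nrm : X -> R).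
Variables (D : set X) (A : X -> X) (X0 : set X) (B : X -> X).
Hypotheses (Fnorm : is_Fnorm nrm) (complete : Fcomplete nrm) (A_lin : linear_op D A).
Hypothesis closed_pow : forall r, (0 < r)%N -> closed_op nrm (dom_pow D A r) (iter r A).
Hypotheses (X0_dom : X0 `<=` dom_inf D A) (X0_B : forall x, X0 x -> X0 (B x))
  (AB : forall x, X0 x -> A (B x) = x).
Hypotheses (A_uncond : forall x, X0 x -> uncond_conv nrm (fun n => iter n A x))
  (B_uncond : forall x, X0 x -> uncond_conv nrm (fun n => iter n B x)).

(* The extra factor [1/(j+1)] pays for the [l] blocks [k < l] that all get
   the weight of [l] in [sum_weight_maxn]. *)
Definition weight j : R := ((2 : R) ^+ j.+1 * j.+1%:R)^-1.

Lemma weight_gt0 j : 0 < weight j.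
Proof. by rewrite invr_gt0 mulr_gt0 ?exprn_gt0 ?ltr0n. Qed.

Lemma weight_le j : weight j <= ((2 : R) ^+ j.+1)^-1.
Proof.
by rewrite /weight invfM ler_piMr ?invr_ge0 ?exprn_ge0 // invf_le1 ?ltr0n // ler1n.
Qed.

Lemma sum_weight_maxn l M :
  \sum_(0 <= k < M) weight (maxn k l) <= 2 * ((2 : R) ^+ l)^-1.
Proof.
have weight_ge0 k : 0 <= weight k by exact/ltW/weight_gt0.
apply: (@le_trans _ _ (\sum_(0 <= k < l + M) weight (maxn k l))).
  rewrite (@big_cat_nat _ _ _ M 0 (l + M)) ?leq_addl //= lerDl.
  exact: sumr_ge0.
rewrite (@big_cat_nat _ _ _ l 0 (l + M)) ?leq_addr //=.
have -> : \sum_(0 <= k < l) weight (maxn k l) = weight l *+ l.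
  rewrite -[l in _ *+ l]subn0 -sumr_const_nat big_nat_cond [RHS]big_nat_cond.
  by apply: eq_bigr => k /andP[/andP[_ kl] _]; rewrite (maxn_idPr (ltnW kl)).
have low : weight l *+ l <= ((2 : R) ^+ l.+1)^-1.
  apply: (@le_trans _ _ (weight l * l.+1%:R)).
    by rewrite -[_ *+ l]mulr_natr; apply: ler_wpM2l; rewrite ?ler_nat.
  by rewrite /weight invfM -mulrA mulVf ?mulr1 // pnatr_eq0.
have high : \sum_(l <= k < l + M) weight (maxn k l) <= ((2 : R) ^+ l)^-1.
  apply: le_trans (sum_inv_pow2_iota_le R l M).
  rewrite /index_iota addnC addnK big_seq [X in _ <= X]big_seq.
  apply: ler_sum => k; rewrite mem_iota => /andP[lk _].
  by rewrite (maxn_idPl lk) weight_le.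
have : ((2 : R) ^+ l.+1)^-1 <= ((2 : R) ^+ l)^-1.
  by rewrite lef_pV2 ?posrE ?exprn_gt0 // ler_eXn2l // ltr1n.
lra.
Qed.

Variable y : nat -> X.
Hypothesis y_X0 : forall k, X0 (y k).

Lemma exists_tail_thresholds : exists gap : nat -> nat, forall k j s,
  (k <= j)%N -> uniq s -> (forall n, n \in s -> gap j < n)%N ->
  nrm (\sum_(n <- s) iter n A (y k)) < weight j /\
  nrm (\sum_(n <- s) iter n B (y k)) < weight j.
Proof.
have tail k j : exists t : nat, forall s, uniq s -> all (fun n => t < n)%N s ->
    nrm (\sum_(n <- s) iter n A (y k)) < weight j /\
    nrm (\sum_(n <- s) iter n B (y k)) < weight j.
  have [NA [_ A_tail]] := A_uncond (y_X0 k) (weight_gt0 j).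
  have [NB [_ B_tail]] := B_uncond (y_X0 k) (weight_gt0 j).
  exists (maxn NA NB) => s s_uniq /allP s_gt; split.
    by apply: A_tail => //; apply/allP => n /s_gt; rewrite gtn_max => /andP[].
  by apply: B_tail => //; apply/allP => n /s_gt; rewrite gtn_max => /andP[].
pose t k j := projT1 (cid (tail k j)).
exists (fun j => \max_(k < j.+1) t k j)%N => k j s kj s_uniq s_gt.
apply: (projT2 (cid (tail k j))) => //; apply/allP => n /s_gt.
apply: leq_ltn_trans.
exact: (@leq_bigmax _ (fun i : 'I_j.+1 => t i j) (Ordinal (kj : (k < j.+1)%N))).
Qed.

Variable gap : nat -> nat.
Hypothesis tails_small : forall k j s,
  (k <= j)%N -> uniq s -> (forall n, n \in s -> gap j < n)%N ->
  nrm (\sum_(n <- s) iter n A (y k)) < weight j /\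
  nrm (\sum_(n <- s) iter n B (y k)) < weight j.

Lemma sum_iterAB_small k j m (r : seq nat) : (k <= j)%N -> uniq r ->
  (forall n, n \in r -> (n + gap j < m) || (m + gap j < n))%N ->
  nrm (\sum_(n <- r) iter m A (iter n B (y k))) <= 2 * weight j.
Proof.
move=> kj r_uniq r_far; have y_k := y_X0 k.
rewrite (bigID (fun n => m < n)%N) /= [2 * _]mulr_natl mulr2n.
apply: le_trans (Fnorm_triangle Fnorm _ _) (lerD _ _); apply: ltW.
- rewrite -big_filter big_seq (eq_bigr (fun n => iter (n - m) B (y k))); last first.
    by move=> n; rewrite mem_filter => /andP[mn _]; rewrite (iter_AB X0_B AB) // ltnW.
  rewrite -big_seq -(big_map (subn^~ m) xpredT).
  apply: (tails_small kj _ _).2.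
    rewrite map_inj_in_uniq ?filter_uniq // => a b.
    by rewrite !mem_filter => /andP[ma _] /andP[mb _]; lia.
  by move=> d /mapP[n]; rewrite mem_filter => /andP[mn /r_far far] ->; lia.
- rewrite -big_filter big_seq (eq_bigr (fun n => iter (m - n) A (y k))); last first.
    move=> n; rewrite mem_filter => /andP[nm /r_far far].
    by rewrite (iter_AB X0_B AB) // ifF //; apply/negbTE; rewrite -ltnNge; lia.
  rewrite -big_seq -(big_map (fun n => m - n)%N xpredT).
  apply: (tails_small kj _ _).1.
    rewrite map_inj_in_uniq ?filter_uniq // => a b.
    by rewrite !mem_filter => /andP[am _] /andP[bm _]; lia.
  by move=> d /mapP[n]; rewrite mem_filter => /andP[nm /r_far far] ->; lia.
Qed.

Definition psum M :=
  \sum_(0 <= k < M) \sum_(0 <= n < M | sep_set gap k n) iter n B (y k).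

Lemma dom_inf_iter_B k n : dom_inf D A (iter n B (y k)).
Proof. exact/X0_dom/(X0_iter_B X0_B). Qed.

Lemma dom_inf_psum M : dom_inf D A (psum M).
Proof. by do 2 apply: (dom_inf_sum A_lin) => ?; apply: dom_inf_iter_B. Qed.

Lemma iter_psum m M : iter m A (psum M) =
  \sum_(0 <= k < M) \sum_(0 <= n < M | sep_set gap k n) iter m A (iter n B (y k)).
Proof.
have dom_blocks k : dom_inf D A (\sum_(0 <= n < M | sep_set gap k n) iter n B (y k)).
  by apply: (dom_inf_sum A_lin) => n; apply: dom_inf_iter_B.
rewrite /psum (iter_sum A_lin) //; apply: eq_bigr => k _.
by rewrite -big_filter (iter_sum A_lin) ?big_filter // => n; apply: dom_inf_iter_B.
Qed.

Lemma iter_psumB m M M' : (M <= M')%N -> iter m A (psum M') - iter m A (psum M) =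
  \sum_(0 <= k < M') \sum_(M <= n < M' | sep_set gap k n) iter m A (iter n B (y k)).
Proof.
move=> MM'; rewrite !iter_psum.
set F := fun k n => iter m A (iter n B (y k)).
have -> : \sum_(0 <= k < M) \sum_(0 <= n < M | sep_set gap k n) F k n =
          \sum_(0 <= k < M') \sum_(0 <= n < M | sep_set gap k n) F k n.
  rewrite [RHS](@big_cat_nat _ _ _ M 0 M') //= [X in _ = _ + X]big_nat_cond.
  rewrite [X in _ = _ + X]big1 ?addr0 // => k /andP[/andP[Mk _] _].
  rewrite big_nat_cond big1 // => n /andP[/andP[_ nM] /sep_set_large n_large].
  by exfalso; lia.
rewrite -sumrB; apply: eq_bigr => k _.
by rewrite (@big_cat_nat _ _ _ M 0 M') //= addrC addrK.
Qed.

Lemma iter_psum_cauchy m e : 0 < e -> exists N, forall M M', (N <= M <= M')%N ->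
  nrm (iter m A (psum M') - iter m A (psum M)) < e.
Proof.
move=> e_gt0.
have [J0 J0_small] : exists J0, forall j, (J0 <= j)%N -> ((2 : R) ^+ j)^-1 < e / 4.
  by apply: inv_pow2_lt; lra.
set J := maxn J0 m; exists (m + gap J).+1 => M M' /andP[MN MM'].
rewrite iter_psumB //; apply: le_lt_trans (Fnorm_sum Fnorm _ _) _.
apply: (@le_lt_trans _ _ (\sum_(0 <= k < M') 2 * weight (maxn k J))); last first.
  rewrite -mulr_sumr; have := sum_weight_maxn J M'.
  by have := J0_small J (leq_maxl _ _); lra.
apply: ler_sum => k _; rewrite -big_filter.
apply: sum_iterAB_small; first exact: leq_maxl.
  by rewrite filter_uniq // iota_uniq.
move=> n; rewrite mem_filter mem_index_iota.
move=> /andP[/sep_set_large n_large /andP[Mn _]].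
have mJ : (m <= J)%N by exact: leq_maxr.
by case: (leqP k J); lia.
Qed.

Lemma iter_psum_near l m M : sep_set gap l m -> (m < M)%N ->
  nrm (iter m A (psum M) - y l) <= 4 * ((2 : R) ^+ l)^-1.
Proof.
move=> Elm mM; have m_large := sep_set_large Elm.
have split_m k : \sum_(0 <= n < M | sep_set gap k n) iter m A (iter n B (y k)) =
    \sum_(0 <= n < M | sep_set gap k n && (n != m)) iter m A (iter n B (y k)) +
    (if k == l then y l else 0).
  rewrite (bigID (fun n => n != m)) /=; congr (_ + _).
  rewrite (eq_bigl (fun n => (n == m) && sep_set gap k n)) => [|n]; last first.
    by rewrite negbK andbC.
  rewrite big_mkcondr big_nat1_eq mM /=.
  have [->|kl] := eqVneq k l; first by rewrite Elm (iter_AB X0_B AB) // leqnn subnn.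
  case: ifP => // Ekm; have := sep_set_far Ekm Elm; rewrite kl => /(_ isT); lia.
rewrite iter_psum (eq_bigr _ (fun k _ => split_m k)) big_split /=.
rewrite -big_mkcond big_nat1_eq ifT; last lia.
rewrite addrK; apply: le_trans (Fnorm_sum Fnorm _ _) _.
apply: (@le_trans _ _ (\sum_(0 <= k < M) 2 * weight (maxn k l))).
  apply: ler_sum => k _; rewrite -big_filter.
  apply: sum_iterAB_small; first exact: leq_maxl.
    by rewrite filter_uniq // iota_uniq.
  move=> n; rewrite mem_filter => /andP[/andP[Ekn nm] _].
  by apply: sep_set_far Ekn Elm _; rewrite nm orbT.
by rewrite -mulr_sumr; have := sum_weight_maxn l M; lra.
Qed.

Lemma iter_psum_cvg m : exists a, Fcvg nrm (fun M => iter m A (psum M)) a.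
Proof. exact/(Fcauchy_cvg Fnorm complete)/iter_psum_cauchy. Qed.

Definition fhc_vector := projT1 (cid (iter_psum_cvg 0)).

Lemma fhc_vector_iter m : (0 < m)%N ->
  dom_pow D A m fhc_vector /\
  Fcvg nrm (fun M => iter m A (psum M)) (iter m A fhc_vector).
Proof.
move=> m_gt0; have [a psum_a] := iter_psum_cvg m.
have [dom_f ->] := Fcvg_closed_op (closed_pow m_gt0) (fun M => @dom_inf_psum M m)
  (projT2 (cid (iter_psum_cvg 0))) psum_a.
by split.
Qed.

Lemma fhc_vector_near l m : sep_set gap l m ->
  nrm (iter m A fhc_vector - y l) <= 4 * ((2 : R) ^+ l)^-1.
Proof.
move=> Elm; have m_gt0 : (0 < m)%N by have := sep_set_large Elm; lia.
apply: (Fcvg_le Fnorm (fhc_vector_iter m_gt0).2) => M.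
exact: iter_psum_near.
Qed.

Lemma fhc_vector_freq_hypercyclic :
  (forall x e L, 0 < e -> exists l, (L <= l)%N /\ nrm (y l - x) < e) ->
  freq_hypercyclic nrm D A.
Proof.
move=> y_recurrent; exists fhc_vector.
split; first exact: (fhc_vector_iter (ltn0Sn 0)).1 0%N isT.
split=> [n _|U U_open [u Uu]]; first exact: (fhc_vector_iter (ltn0Sn n)).1 n (ltnSn n).
have [e [e_gt0 ball_U]] := U_open u Uu.
have [L L_small] : exists L, forall l, (L <= l)%N -> ((2 : R) ^+ l)^-1 < e / 8.
  by apply: inv_pow2_lt; lra.
have [l [Ll y_u]] : exists l, (L <= l)%N /\ nrm (y l - u) < e / 2.
  by apply: y_recurrent; lra.
apply: (@lower_density_gt0 R gap l) => m Elm; apply: ball_U.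
apply: le_lt_trans (Fnorm_sub_triangle Fnorm _ (y l) _) _.
by have := fhc_vector_near Elm; have := L_small l Ll; lra.
Qed.

End Construction.

Lemma theorem2p1_for_any (R : realType) (K : numFieldType) : theorem2p1_for R K.
Proof.
move=> X nrm D A [Fnorm complete] separable A_lin _ _ closed_pow X0 B
  X0_dom X0_dense X0_B AB A_uncond B_uncond.
have [y [y_X0 y_recurrent]] := recurrent_dense_seq Fnorm separable X0_dense.
have [gap tails_small] := exists_tail_thresholds A_uncond B_uncond y_X0.
exact: (fhc_vector_freq_hypercyclic Fnorm complete A_lin closed_pow X0_dom X0_B AB
  y_X0 tails_small y_recurrent).
Qed.

Local Open Scope complex_scope.

Theorem theorem2p1 (R : realType) :
  theorem2p1_for R R /\ theorem2p1_for R R[i].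
Proof. by split; apply: theorem2p1_for_any. Qed.
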